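(* Let $m,k\in\mathbb{Z}$, let $(H,\alpha)$ be a monoidal Hom-bialgebra and $(C,\beta)$ a monoidal Hom-algebra which is a left weak $(H,\alpha)$-Hom-module algebra via $h\otimes c\mapsto h\rightarrow c$ and a left $(H,\alpha)$-Hom-comodule coalgebra with coaction $c\mapsto c_{(-1)}\otimes c_{(0)}$; let $\sigma:H\otimes H\to C$ be a convolution invertible linear map. Let $X=C\otimes H$ with multiplication $(a\otimes h)(b\otimes g)=a[(\alpha^{m}(h_{11})\rightarrow\beta^{-2}(b))\sigma(\alpha^{k+1}(h_{12}),\alpha^{k}(g_{1}))]\otimes\alpha(h_{2}g_{2})$, unit $1_C\otimes1_H$, comultiplication $\Delta(a\otimes h)=a_{1}\otimes\alpha^{m}(a_{2(-1)})\alpha^{-1}(h_{1})\otimes\beta(a_{2(0)})\otimes h_{2}$, counit $\varepsilon(a)\varepsilon(h)$ and structure map $\xi=\beta\otimes\alpha$, and assume $(X,\xi)$ is a monoidal Hom-bialgebra. Define $\varphi^l:H\otimes X\to X$ and $\varphi^r:X\otimes H\to X$ by $$\varphi^{l}(l\otimes(a\otimes h))=(\alpha(l_{11})\rightarrow\beta^{-1}(a))\,\sigma(\alpha^{k+2-m}(l_{12}),\alpha^{k+1}(h_{1}))\otimes\alpha^{1-m}(l_{2})\alpha(h_{2}),$$ $$\varphi^{r}((a\otimes h)\otimes l)=a\,\sigma(\alpha^{k+1}(h_{1}),\alpha^{k+1-m}(l_{1}))\otimes\alpha(h_{2})\alpha^{1-m}(l_{2}).$$ Then $(X,\xi,\varphi^l,\varphi^r)$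 is a weak $(H,\alpha)$ Hom-bimodule, i.e. for all $l,g\in H$, $x\in X$: $\varphi^l(1_H\otimes x)=\xi(x)=\varphi^r(x\otimes1_H)$ and $\varphi^l(\alpha(l)\otimes\varphi^r(x\otimes g))=\varphi^r(\varphi^l(l\otimes x)\otimes\alpha(g))$.
   Context: Field $k$; Sweedler notation. Monoidal Hom-algebra $(A,\beta)$: $\beta(a)(bc)=(ab)\beta(c)$, $\beta(ab)=\beta(a)\beta(b)$, $a1=1a=\beta(a)$, $\beta(1)=1$, $\beta$ a linear automorphism. Monoidal Hom-coalgebra $(C,\gamma)$: $\gamma^{-1}(c_1)\otimes\Delta(c_2)=\Delta(c_1)\otimes\gamma^{-1}(c_2)$, $\Delta\gamma=(\gamma\otimes\gamma)\Delta$, $c_1\varepsilon(c_2)=\gamma^{-1}(c)=\varepsilon(c_1)c_2$, $\varepsilon\gamma=\varepsilon$. Monoidal Hom-bialgebra: both with the same structure map and $\Delta,\varepsilon$ multiplicative and unital. Left weak $(H,\alpha)$-Hom-module algebra: $h\rightarrow(ab)=(h_1\rightarrow a)(h_2\rightarrow b)$, $h\rightarrow1=\varepsilon(h)1$. Left $(H,\alpha)$-Hom-comodule $(M,\mu)$: $\Delta_H(x_{(-1)})\otimes\mu^{-1}(x_{(0)})=\alpha^{-1}(x_{(-1)})\otimes x_{(0)(-1)}\otimes x_{(0)(0)}$, $\rho(\mu(x))=\alpha(x_{(-1)})\otimes\mu(x_{(0)})$, $\varepsilon(x_{(-1)})x_{(0)}=\mu^{-1}(x)$; Hom-comodule coalgebra: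 moreover $b_{(-1)}\otimes b_{(0)1}\otimes b_{(0)2}=b_{1(-1)}b_{2(-1)}\otimes b_{1(0)}\otimes b_{2(0)}$, $\varepsilon(b_{(0)})b_{(-1)}=\varepsilon(b)1_H$. $\sigma$ convolution invertible means there is a linear $\sigma^{-1}:H\otimes H\to C$ with $\sigma(h_1,l_1)\sigma^{-1}(h_2,l_2)=\varepsilon(h)\varepsilon(l)1_C=\sigma^{-1}(h_1,l_1)\sigma(h_2,l_2)$. *)

(* An element of V (x) W is represented by a finite list of simple tensors
   [t : seq (V * W)] (meaning  sum_i t_i.1 (x) t_i.2); two such lists denote
   the same tensor iff they agree on all product functionals f (x) g with
   f, g linear forms (over a field these separate the points of V (x) W).
   Higher tensor powers are tested the same way with products of n linear
   forms.  Linear maps V -> W (x) W' (comultiplications, coactions) are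
   functions V -> seq (W * W') whose pairing with every product functional
   is a linear form. *)
From mathcomp Require Import all_boot all_algebra.
Set Implicit Arguments.
Unset Strict Implicit.
Unset Printing Implicit Defensive.
Import GRing.Theory.
Local Open Scope ring_scope.

Definition zit {V : Type} (f fi : V -> V) (n : int) : V -> V :=
  match n with Posz n => iter n f | Negz n => iter n.+1 fi end.

Section Basic.
Variable F : fieldType.

Definition lin_aut (V : lmodType F) (f fi : V -> V) :=
  [/\ linear f, cancel f fi & cancel fi f].

(* a linear map U (x) V -> W, given as a bilinear map *)
Definition bilinear_map (U V W : lmodType F) (f : U -> V -> W) :=
  (forall u, linear (f u)) /\ (forall v, linear (f^~ v)).

Definition tensor_linear (U V W : lmodType F) (D : U -> seq (V * W)) :=
  forall (f : V -> F) (g : W -> F), scalar f -> scalar g ->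
    scalar (fun u => \sum_(p <- D u) f p.1 * g p.2).

Record hom_algebra (A : lmodType F) (mul : A -> A -> A) (one : A)
    (b bi : A -> A) : Prop := {
  ha_aut : lin_aut b bi;
  ha_mul : bilinear_map mul;
  ha_assoc : forall x y z, mul (b x) (mul y z) = mul (mul x y) (b z);
  ha_morph : forall x y, b (mul x y) = mul (b x) (b y);
  ha_unitr : forall x, mul x one = b x;
  ha_unitl : forall x, mul one x = b x;
  ha_one : b one = one }.

Record hom_coalgebra (C : lmodType F) (D : C -> seq (C * C)) (e : C -> F)
    (g gi : C -> C) : Prop := {
  hc_aut : lin_aut g gi;
  hc_cop : tensor_linear D;
  hc_eps : scalar e;
  hc_coassoc : forall c (f1 f2 f3 : C -> F), scalar f1 -> scalar f2 -> scalar f3 ->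
    \sum_(p <- D c) \sum_(q <- D p.2) f1 (gi p.1) * f2 q.1 * f3 q.2
    = \sum_(p <- D c) \sum_(q <- D p.1) f1 q.1 * f2 q.2 * f3 (gi p.2);
  hc_copmorph : forall c (f1 f2 : C -> F), scalar f1 -> scalar f2 ->
    \sum_(p <- D (g c)) f1 p.1 * f2 p.2 = \sum_(p <- D c) f1 (g p.1) * f2 (g p.2);
  hc_counitr : forall c, \sum_(p <- D c) e p.2 *: p.1 = gi c;
  hc_counitl : forall c, \sum_(p <- D c) e p.1 *: p.2 = gi c;
  hc_epsmorph : forall c, e (g c) = e c }.

Record hom_bialgebra (H : lmodType F) (mul : H -> H -> H) (one : H)
    (D : H -> seq (H * H)) (e : H -> F) (a ai : H -> H) : Prop := {
  hb_alg : hom_algebra mul one a ai;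
  hb_coalg : hom_coalgebra D e a ai;
  hb_copmul : forall x y (f1 f2 : H -> F), scalar f1 -> scalar f2 ->
    \sum_(p <- D (mul x y)) f1 p.1 * f2 p.2
    = \sum_(p <- D x) \sum_(q <- D y) f1 (mul p.1 q.1) * f2 (mul p.2 q.2);
  hb_copone : forall (f1 f2 : H -> F), scalar f1 -> scalar f2 ->
    \sum_(p <- D one) f1 p.1 * f2 p.2 = f1 one * f2 one;
  hb_epsmul : forall x y, e (mul x y) = e x * e y;
  hb_epsone : e one = 1 }.

Record weak_module_algebra (H C : lmodType F) (DH : H -> seq (H * H))
    (eH : H -> F) (mulC : C -> C -> C) (oneC : C) (act : H -> C -> C) : Prop := {
  wm_lin : bilinear_map act;
  wm_mul : forall h a b, act h (mulC a b) = \sum_(p <- DH h) mulC (act p.1 a) (act p.2 b);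
  wm_one : forall h, act h oneC = eH h *: oneC }.

(* left (H, a)-Hom-comodule (M, mu), coaction rho x = x_(-1) (x) x_(0) *)
Record hom_comodule (H M : lmodType F) (DH : H -> seq (H * H)) (eH : H -> F)
    (a ai : H -> H) (rho : M -> seq (H * M)) (mu mui : M -> M) : Prop := {
  cm_aut : lin_aut mu mui;
  cm_lin : tensor_linear rho;
  cm_coassoc : forall x (f1 f2 : H -> F) (f3 : M -> F),
    scalar f1 -> scalar f2 -> scalar f3 ->
    \sum_(p <- rho x) \sum_(q <- DH p.1) f1 q.1 * f2 q.2 * f3 (mui p.2)
    = \sum_(p <- rho x) \sum_(q <- rho p.2) f1 (ai p.1) * f2 q.1 * f3 q.2;
  cm_morph : forall x (f1 : H -> F) (f2 : M -> F), scalar f1 -> scalar f2 ->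
    \sum_(p <- rho (mu x)) f1 p.1 * f2 p.2 = \sum_(p <- rho x) f1 (a p.1) * f2 (mu p.2);
  cm_counit : forall x, \sum_(p <- rho x) eH p.1 *: p.2 = mui x }.

Record hom_comodule_coalgebra (H C : lmodType F) (mulH : H -> H -> H) (oneH : H)
    (DH : H -> seq (H * H)) (eH : H -> F) (a ai : H -> H)
    (DC : C -> seq (C * C)) (eC : C -> F) (b bi : C -> C)
    (rho : C -> seq (H * C)) : Prop := {
  cc_comod : hom_comodule DH eH a ai rho b bi;
  cc_cop : forall x (f1 : H -> F) (f2 f3 : C -> F),
    scalar f1 -> scalar f2 -> scalar f3 ->
    \sum_(p <- rho x) \sum_(q <- DC p.2) f1 p.1 * f2 q.1 * f3 q.2
    = \sum_(p <- DC x) \sum_(q <- rho p.1) \sum_(r <- rho p.2)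
        f1 (mulH q.1 r.1) * f2 q.2 * f3 r.2;
  cc_eps : forall x, \sum_(p <- rho x) eC p.2 *: p.1 = eC x *: oneH }.

Definition conv_invertible (H C : lmodType F) (DH : H -> seq (H * H))
    (eH : H -> F) (mulC : C -> C -> C) (oneC : C) (sigma : H -> H -> C) :=
  exists sigmai : H -> H -> C, bilinear_map sigmai /\
    forall h l,
      \sum_(p <- DH h) \sum_(q <- DH l) mulC (sigma p.1 q.1) (sigmai p.2 q.2)
        = (eH h * eH l) *: oneC /\
      \sum_(p <- DH h) \sum_(q <- DH l) mulC (sigmai p.1 q.1) (sigma p.2 q.2)
        = (eH h * eH l) *: oneC.

End Basic.

Section Crossed.
Variables (F : fieldType) (H C : lmodType F).
Variables (mulH : H -> H -> H) (oneH : H) (DH : H -> seq (H * H)) (eH : H -> F)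
  (al ali : H -> H).
Variables (mulC : C -> C -> C) (oneC : C) (DC : C -> seq (C * C)) (eC : C -> F)
  (be bei : C -> C).
Variables (act : H -> C -> C) (rho : C -> seq (H * C)) (sigma : H -> H -> C)
  (m k : int).

Local Notation A n := (zit al ali n).
Local Notation B n := (zit be bei n).

(* (a (x) h)(b (x) g) =
   a[(al^m(h11) -> be^-2(b)) sigma(al^(k+1)(h12), al^k(g1))] (x) al(h2 g2) *)
Definition mulX1 (p q : C * H) : seq (C * H) :=
  flatten [seq [seq (mulC p.1 (mulC (act (A m r.1) (B (-2) q.1))
                                   (sigma (A (k + 1) r.2) (A k s.1))),
                     al (mulH t.2 s.2)) | r <- DH t.1, s <- DH q.2]
          | t <- DH p.2].
Definition mulX (x y : seq (C * H)) : seq (C * H) :=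
  flatten [seq mulX1 p q | p <- x, q <- y].
Definition oneX : seq (C * H) := [:: (oneC, oneH)].
Definition xi1 (p : C * H) : C * H := (be p.1, al p.2).
Definition xii1 (p : C * H) : C * H := (bei p.1, ali p.2).
Definition xiX (x : seq (C * H)) := map xi1 x.
Definition xiiX (x : seq (C * H)) := map xii1 x.
(* Delta(a (x) h) = a1 (x) al^m(a2_(-1)) al^-1(h1) (x) be(a2_(0)) (x) h2 *)
Definition copX1 (p : C * H) : seq ((C * H) * (C * H)) :=
  flatten [seq [seq ((q.1, mulH (A m r.1) (ali t.1)), (be r.2, t.2))
               | r <- rho q.2, t <- DH p.2] | q <- DC p.1].
Definition copX (x : seq (C * H)) := flatten (map copX1 x).
Definition epsX1 (p : C * H) : F := eC p.1 * eH p.2.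
Definition epsX (x : seq (C * H)) : F := \sum_(p <- x) epsX1 p.
Definition evX (f : C -> F) (g : H -> F) (p : C * H) : F := f p.1 * g p.2.
Definition teqX (x y : seq (C * H)) :=
  forall (f : C -> F) (g : H -> F), scalar f -> scalar g ->
    \sum_(p <- x) evX f g p = \sum_(p <- y) evX f g p.

(* (X, xi) with the above structure is a monoidal Hom-bialgebra.
   (xi = be (x) al is automatically a linear automorphism, and the
   structure maps are linear by construction.) *)
Record X_hom_bialgebra : Prop := {
  xa_assoc : forall x y z, teqX (mulX (xiX x) (mulX y z)) (mulX (mulX x y) (xiX z));
  xa_morph : forall x y, teqX (xiX (mulX x y)) (mulX (xiX x) (xiX y));
  xa_unitr : forall x, teqX (mulX x oneX) (xiX x);
  xa_unitl : forall x, teqX (mulX oneX x) (xiX x);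
  xa_one : teqX (xiX oneX) oneX;
  xc_coassoc : forall x (f1 f2 f3 : C -> F) (g1 g2 g3 : H -> F),
    scalar f1 -> scalar f2 -> scalar f3 -> scalar g1 -> scalar g2 -> scalar g3 ->
    \sum_(p <- copX x) \sum_(q <- copX1 p.2)
       evX f1 g1 (xii1 p.1) * evX f2 g2 q.1 * evX f3 g3 q.2
    = \sum_(p <- copX x) \sum_(q <- copX1 p.1)
       evX f1 g1 q.1 * evX f2 g2 q.2 * evX f3 g3 (xii1 p.2);
  xc_copmorph : forall x (f1 f2 : C -> F) (g1 g2 : H -> F),
    scalar f1 -> scalar f2 -> scalar g1 -> scalar g2 ->
    \sum_(p <- copX (xiX x)) evX f1 g1 p.1 * evX f2 g2 p.2
    = \sum_(p <- copX x) evX f1 g1 (xi1 p.1) * evX f2 g2 (xi1 p.2);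
  xc_counitr : forall x,
    teqX [seq (epsX1 p.2 *: p.1.1, p.1.2) | p <- copX x] (xiiX x);
  xc_counitl : forall x,
    teqX [seq (epsX1 p.1 *: p.2.1, p.2.2) | p <- copX x] (xiiX x);
  xc_epsmorph : forall x, epsX (xiX x) = epsX x;
  xb_copmul : forall x y (f1 f2 : C -> F) (g1 g2 : H -> F),
    scalar f1 -> scalar f2 -> scalar g1 -> scalar g2 ->
    \sum_(p <- copX (mulX x y)) evX f1 g1 p.1 * evX f2 g2 p.2
    = \sum_(p <- copX x) \sum_(q <- copX y)
        \sum_(u <- mulX1 p.1 q.1) \sum_(v <- mulX1 p.2 q.2)
          evX f1 g1 u * evX f2 g2 v;
  xb_copone : forall (f1 f2 : C -> F) (g1 g2 : H -> F),
    scalar f1 -> scalar f2 -> scalar g1 -> scalar g2 ->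
    \sum_(p <- copX oneX) evX f1 g1 p.1 * evX f2 g2 p.2
    = evX f1 g1 (oneC, oneH) * evX f2 g2 (oneC, oneH);
  xb_epsmul : forall x y, epsX (mulX x y) = epsX x * epsX y;
  xb_epsone : epsX oneX = 1 }.

(* phi^l(l (x) (a (x) h)) =
   (al(l11) -> be^-1(a)) sigma(al^(k+2-m)(l12), al^(k+1)(h1))
     (x) al^(1-m)(l2) al(h2) *)
Definition phil1 (l : H) (p : C * H) : seq (C * H) :=
  flatten [seq [seq (mulC (act (al r.1) (bei p.1))
                          (sigma (A (k + 2 - m) r.2) (A (k + 1) s.1)),
                     mulH (A (1 - m) t.2) (al s.2)) | r <- DH t.1, s <- DH p.2]
          | t <- DH l].
Definition phil (l : H) (x : seq (C * H)) : seq (C * H) := flatten (map (phil1 l) x).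
(* phi^r((a (x) h) (x) l) =
   a sigma(al^(k+1)(h1), al^(k+1-m)(l1)) (x) al(h2) al^(1-m)(l2) *)
Definition phir1 (p : C * H) (l : H) : seq (C * H) :=
  [seq (mulC p.1 (sigma (A (k + 1) s.1) (A (k + 1 - m) t.1)),
        mulH (al s.2) (A (1 - m) t.2)) | s <- DH p.2, t <- DH l].
Definition phir (x : seq (C * H)) (l : H) : seq (C * H) :=
  flatten (map (phir1^~ l) x).

Definition weak_hom_bimodule : Prop :=
  (forall x, teqX (phil oneH x) (xiX x) /\ teqX (phir x oneH) (xiX x)) /\
  (forall l g x, teqX (phil (al l) (phir x g)) (phir (phil l x) (al g))).

End Crossed.

(* phi^l (l (x) -) is left multiplication in X by 1 (x) al^-m(l) and
   phi^r (- (x) l) is right multiplication by the same element.  Since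
   xi (1 (x) al^-m(l)) = 1 (x) al^-m(al l), the bimodule identity is an
   instance of the Hom-associativity of X, and the unit identities are the
   unit axioms of X.
   Identifying phi^l and phi^r with multiplications uses sigma(h, 1) = eps(h) 1,
   be (sigma(h, g)) = sigma(al h, al g) and be (h -> c) = al h -> be c.  These
   are not hypotheses: they follow by applying id (x) eps to the unit and
   multiplicativity axioms of (X, xi) on elements 1 (x) h and c (x) 1.
   Tensors are lists of simple tensors compared on product functionals; over a
   field linear forms separate points (Zorn's lemma gives a maximal
   subspace avoiding a vector v != 0, hence a form taking the value 1 at v),
   so such equalities hold for every bilinear expression, and can therefore be
   substituted inside the products of X. *)

From Pilot Require Import Defs.
From HB Require Import structures.
From mathcomp Require Import all_boot all_algebra.
From mathcomp Require Import boolp classical_sets zify.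

Set Implicit Arguments.
Unset Strict Implicit.
Unset Printing Implicit Defensive.
Import GRing.Theory.
Local Open Scope ring_scope.

Section LinearMaps.
Variables (F : fieldType) (V U W : lmodType F).

Definition linear_of (f : V -> U) (lf : linear f) : {linear V -> U} :=
  HB.pack f (GRing.isLinear.Build F V U _ f lf).
Definition scalar_of (f : V -> F) (lf : scalar f) : {scalar V} :=
  HB.pack f (GRing.isLinear.Build F V F _ f lf).

Lemma linZ (f : V -> U) : linear f -> forall a u, f (a *: u) = a *: f u.
Proof. by move=> lf; exact: (linearZZ (linear_of lf)). Qed.

Lemma lin_sum (f : V -> U) I (s : seq I) (G : I -> V) : linear f ->
  f (\sum_(i <- s) G i) = \sum_(i <- s) f (G i).
Proof. by move=> lf; exact: (raddf_sum (linear_of lf)). Qed.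

Lemma sc0 (f : V -> F) : scalar f -> f 0 = 0.
Proof. by move=> lf; exact: (raddf0 (scalar_of lf)). Qed.

Lemma scB (f : V -> F) : scalar f -> forall u w, f (u - w) = f u - f w.
Proof. by move=> lf; exact: (raddfB (scalar_of lf)). Qed.

Lemma scN (f : V -> F) : scalar f -> forall u, f (- u) = - f u.
Proof. by move=> lf; exact: (raddfN (scalar_of lf)). Qed.

Lemma scZ (f : V -> F) : scalar f -> forall a u, f (a *: u) = a * f u.
Proof. by move=> lf; exact: (scalarZ (scalar_of lf)). Qed.

Lemma sc_sum (f : V -> F) I (s : seq I) (G : I -> V) : scalar f ->
  f (\sum_(i <- s) G i) = \sum_(i <- s) f (G i).
Proof. by move=> lf; exact: (raddf_sum (scalar_of lf)). Qed.

Lemma linear_comp (g : U -> W) (f : V -> U) :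
  linear g -> linear f -> linear (fun x => g (f x)).
Proof. by move=> lg lf a u v; rewrite lf lg. Qed.

Lemma linear_compl (U' : lmodType F) (op : U -> U' -> W) (f : V -> U) w :
  (forall w, linear (op^~ w)) -> linear f -> linear (fun x => op (f x) w).
Proof. by move=> lop lf; exact: linear_comp (lop w) lf. Qed.

Lemma linear_compr (U' : lmodType F) (op : U' -> U -> W) (f : V -> U) w :
  (forall w, linear (op w)) -> linear f -> linear (fun x => op w (f x)).
Proof. by move=> lop lf; exact: linear_comp (lop w) lf. Qed.

Lemma scalar_comp (g : U -> F) (f : V -> U) :
  scalar g -> linear f -> scalar (fun x => g (f x)).
Proof. by move=> lg lf a u v; rewrite lf lg. Qed.

Lemma scalar_mulr (f : V -> F) c : scalar f -> scalar (fun x => f x * c).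
Proof. by move=> lf a u v; rewrite lf mulrDl mulrA. Qed.

Lemma scalar_mull (f : V -> F) c : scalar f -> scalar (fun x => c * f x).
Proof. by move=> lf a u v; rewrite lf mulrDr mulrCA. Qed.

Lemma scalar_big I (s : seq I) (G : V -> I -> F) :
  (forall i, scalar (G^~ i)) -> scalar (fun x => \sum_(i <- s) G x i).
Proof.
move=> lG a u v; elim: s => [|i s IH]; first by rewrite !big_nil mulr0 addr0.
by rewrite !big_cons IH lG mulrDr addrACA.
Qed.

Lemma linear_big I (s : seq I) (G : V -> I -> U) :
  (forall i, linear (G^~ i)) -> linear (fun x => \sum_(i <- s) G x i).
Proof.
move=> lG a u v; elim: s => [|i s IH]; first by rewrite !big_nil scaler0 addr0.
by rewrite !big_cons IH lG scalerDr addrACA.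
Qed.

Lemma eq_scalar (G1 G2 : V -> F) : G1 =1 G2 -> scalar G2 -> scalar G1.
Proof. by move=> E sG a u v; rewrite !E sG. Qed.

End LinearMaps.

Section LinearFormSeparation.
Variables (F : fieldType) (V : lmodType F) (v : V).

Definition comb_closed (A : set V) :=
  forall x y (a : F), A x -> A y -> A (a *: x + y).

Definition avoiding (A : set V) := comb_closed A /\ ~ A v.

Lemma exists_maximal_avoiding : exists A, avoiding A /\
  forall B, (A `<` B)%classic -> ~ avoiding B.
Proof.
apply: Zorn_bigcup => Fam famP tot; split.
  move=> x y a [X FX Xx] [Y FY Yy].
  have [XY|YX] := tot X Y FX FY.
    by exists Y => //; apply: (famP Y FY).1 => //; exact: XY.
  by exists X => //; apply: (famP X FX).1 => //; exact: YX.
by move=> [X FX Xv]; exact: (famP X FX).2.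
Qed.

Variable A : set V.
Hypotheses (closedA : comb_closed A) (A_v : ~ A v).
Hypothesis maxA : forall B, (A `<` B)%classic -> ~ avoiding B.
Hypothesis v_neq0 : v != 0.

Lemma maximal_avoiding0 : A 0.
Proof.
apply: contrapT => nA0.
have A_empty x : ~ A x.
  by move=> Ax; apply: nA0; have := closedA (-1) Ax Ax; rewrite scaleN1r addNr.
apply: (maxA (B := [set 0])).
  by split; [move=> x /A_empty | move=> /(_ 0 erefl)].
split; first by move=> x y a -> ->; rewrite scaler0 addr0.
by move=> /= v0; move: v_neq0; rewrite v0 eqxx.
Qed.

Let A_scale a x : A x -> A (a *: x).
Proof. by move=> Ax; have := closedA a Ax maximal_avoiding0; rewrite addr0. Qed.

Let A_sub x y : A x -> A y -> A (x - y).
Proof. by move=> Ax Ay; have := closedA (-1) Ay Ax; rewrite scaleN1r addrC. Qed.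

(* A plus the line through u is still closed; by maximality it contains v
   unless it is A itself. *)
Lemma maximal_avoiding_coset u : exists c : F, A (u - c *: v).
Proof.
pose A' := fun w => exists a c, A a /\ w = a + c *: u.
have closedA' : comb_closed A'.
  move=> x y b [a1 [c1 [Aa1 ->]]] [a2 [c2 [Aa2 ->]]].
  exists (b *: a1 + a2), (b * c1 + c2); split; first exact: closedA.
  by rewrite scalerDr scalerDl scalerA addrACA.
have [[a [c [Aa vE]]]|nA'v] := pselect (A' v).
  have c_neq0 : c != 0.
    by apply: contra_notN A_v => /eqP c0; rewrite vE c0 scale0r addr0.
  exists c^-1; have -> : u - c^-1 *: v = - (c^-1 *: a).
    by rewrite vE scalerDr scalerA mulVf // scale1r opprD addrCA subrr addr0.
  by rewrite -sub0r; apply: A_sub; [exact: maximal_avoiding0 | exact: A_scale].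
have [A'A|nA'A] := pselect ((A' `<=` A)%classic).
  exists 0; rewrite scale0r subr0; apply: A'A; exists 0, 1.
  by rewrite add0r scale1r; split=> //; exact: maximal_avoiding0.
exfalso; apply: (maxA (B := A')); last by split.
by split=> // x Ax; exists x, 0; rewrite scale0r addr0.
Qed.

Lemma maximal_avoiding_coset_uniq u c d :
  A (u - c *: v) -> A (u - d *: v) -> c = d.
Proof.
move=> Ac Ad; apply/eqP; rewrite eq_sym -subr_eq0; apply: contraT => dc_neq0.
have := A_scale (d - c)^-1 (A_sub Ac Ad).
suff -> : u - c *: v - (u - d *: v) = (d - c) *: v.
  by rewrite scalerA mulVf // scale1r.
by rewrite opprB addrC addrA subrK -scalerBl.
Qed.

Lemma maximal_avoiding_form : exists f : V -> F, scalar f /\ f v = 1.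
Proof.
pose f u := projT1 (cid (maximal_avoiding_coset u)).
have fP u : A (u - f u *: v) by rewrite /f; case: cid.
exists f; split.
  move=> a x y; apply: (maximal_avoiding_coset_uniq (fP (a *: x + y))).
  have := closedA a (fP x) (fP y).
  by rewrite scalerBr scalerA addrACA -opprD -scalerDl.
apply: maximal_avoiding_coset_uniq (fP v) _.
by rewrite scale1r subrr; exact: maximal_avoiding0.
Qed.

End LinearFormSeparation.

Lemma linear_form_separates (F : fieldType) (V : lmodType F) (v : V) :
  v != 0 -> exists f : V -> F, scalar f /\ f v = 1.
Proof.
move=> v_neq0; have [A [[closedA A_v] maxA]] := exists_maximal_avoiding v.
exact: maximal_avoiding_form closedA A_v maxA v_neq0.
Qed.

Lemma linear_forms_eq (F : fieldType) (V : lmodType F) (u w : V) :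
  (forall f : V -> F, scalar f -> f u = f w) -> u = w.
Proof.
move=> fuw; apply/eqP; rewrite -subr_eq0; apply: contraT.
move=> /linear_form_separates [f [sf]]; rewrite scB // fuw // subrr => /esym/eqP.
by rewrite oner_eq0.
Qed.

Section TensorLists.
Variables (F : fieldType) (V W U : lmodType F).

Definition tensor_eq (L L' : seq (V * W)) :=
  forall (f : V -> F) (g : W -> F), scalar f -> scalar g ->
    \sum_(p <- L) f p.1 * g p.2 = \sum_(p <- L') f p.1 * g p.2.

Definition bilinear_form (G : V * W -> F) :=
  (forall v, scalar (fun w => G (v, w))) /\ (forall w, scalar (fun v => G (v, w))).

(* Induction on L: a form f0 with f0 v1 = 1 splits every first factor into
   its v1-component and a rest; the v1-components cancel against (v1, w1). *)
Lemma tensor_zero_bilinear (L : seq (V * W)) :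
  (forall f : V -> F, scalar f -> \sum_(p <- L) f p.1 *: p.2 = 0) ->
  forall G, bilinear_form G -> \sum_(p <- L) G p = 0.
Proof.
move=> L0 G [G1 G2].
have G0l w : G (0, w) = 0 := sc0 (G2 w).
have GBl w x y : G (x - y, w) = G (x, w) - G (y, w) := scB (G2 w) x y.
have GZl w a x : G (a *: x, w) = a * G (x, w) := scZ (G2 w) a x.
have GZr v a y : G (v, a *: y) = a * G (v, y) := scZ (G1 v) a y.
have GNr v y : G (v, - y) = - G (v, y) := scN (G1 v) y.
have G_sumr v I s (Y : I -> W) : G (v, \sum_(i <- s) Y i) = \sum_(i <- s) G (v, Y i).
  exact: sc_sum (G1 v).
move sL : (size L) => n; elim: n L sL L0 => [|n IH] [|[v1 w1] L] //=.
  by rewrite big_nil.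
move=> [sL] L0.
have L_eq f : scalar f -> \sum_(p <- L) f p.1 *: p.2 = - (f v1 *: w1).
  by move=> sf; apply/eqP; rewrite -addr_eq0 addrC; have := L0 f sf; rewrite big_cons => ->.
rewrite big_cons.
have [v1_0|v1_neq0] := eqVneq v1 0.
  rewrite v1_0 G0l add0r; apply: IH => // f sf.
  by rewrite L_eq // v1_0 (sc0 sf) scale0r oppr0.
have [f0 [sf0 f0v1]] := linear_form_separates v1_neq0.
have -> : \sum_(p <- L) G p = \sum_(p <- [seq (p.1 - f0 p.1 *: v1, p.2) | p <- L]) G p
                             + G (v1, \sum_(p <- L) f0 p.1 *: p.2).
  rewrite big_map G_sumr -big_split; apply: eq_bigr => -[x y] _ /=.
  by rewrite GZr -GZl GBl subrK.
rewrite IH ?size_map //.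
  by rewrite L_eq // f0v1 scale1r GNr add0r subrr.
move=> f sf; rewrite big_map /=.
under eq_bigr do rewrite scB // scZ // scalerBl mulrC -scalerA.
by rewrite sumrB -scaler_sumr !L_eq // f0v1 scale1r scalerN opprK addNr.
Qed.

Lemma tensor_eq_bilinear (L L' : seq (V * W)) : tensor_eq L L' ->
  forall G, bilinear_form G -> \sum_(p <- L) G p = \sum_(p <- L') G p.
Proof.
move=> LL' G bG; apply/eqP; rewrite -subr_eq0; apply/eqP.
have GNl (p : V * W) : G (- p.1, p.2) = - G p by case: p => v w; exact: scN (bG.2 w) v.
have diff0 f : scalar f ->
    \sum_(p <- L ++ [seq (- p.1, p.2) | p <- L']) f p.1 *: p.2 = 0.
  move=> sf; rewrite big_cat big_map /=.
  under [X in _ + X]eq_bigr do rewrite scN // scaleNr.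
  rewrite sumrN; apply/eqP; rewrite subr_eq0; apply/eqP.
  apply: linear_forms_eq => g sg.
  rewrite !sc_sum //; under eq_bigr do rewrite scZ //.
  by under [RHS]eq_bigr do rewrite scZ //; exact: LL'.
have := tensor_zero_bilinear diff0 bG; rewrite big_cat big_map /=.
by under [X in _ + X = _ -> _]eq_bigr do rewrite GNl; rewrite sumrN.
Qed.

Lemma tensor_linear_bilinear (D : U -> seq (V * W)) : tensor_linear D ->
  forall G, bilinear_form G -> scalar (fun u => \sum_(p <- D u) G p).
Proof.
move=> DL G bG a u w.
have GZl y b x : G (b *: x, y) = b * G (x, y) := scZ (bG.2 y) b x.
have D_eq : tensor_eq (D (a *: u + w)) ([seq (a *: p.1, p.2) | p <- D u] ++ D w).
  move=> f g sf sg; rewrite (DL f g sf sg a u w) big_cat big_map /=.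
  by rewrite mulr_sumr; under [in RHS]eq_bigr do rewrite scZ // -mulrA.
rewrite (tensor_eq_bilinear D_eq bG) big_cat big_map /= mulr_sumr.
by congr (_ + _); apply: eq_bigr => -[x y] _; exact: GZl.
Qed.

End TensorLists.

Section IntegerIterates.
Variables (T : Type) (f fi : T -> T).
Hypotheses (fK : cancel f fi) (fiK : cancel fi f).
Local Notation Z n := (zit f fi n).

Lemma zitS n x : Z (n + 1) x = f (Z n x).
Proof.
case: n => [n|[|n]].
- by rewrite -PoszD addn1.
- by rewrite (_ : Negz 0 + 1 = 0) /= ?fiK //; lia.
- by rewrite (_ : Negz n.+1 + 1 = Negz n) /= ?fiK //; lia.
Qed.

Lemma zitP n x : Z (n - 1) x = fi (Z n x).
Proof. by rewrite -{2}(subrK 1 n) zitS fK. Qed.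

Lemma zitD n n' x : Z (n + n') x = Z n (Z n' x).
Proof.
elim/int_rect: n x => [|n IH|n IH] x; first by rewrite add0r.
  by rewrite -addn1 PoszD addrAC !zitS IH.
by rewrite -addn1 PoszD opprD addrAC !zitP IH.
Qed.

Lemma zitNK n x : Z n (Z (- n) x) = x.
Proof. by rewrite -zitD subrr. Qed.

Lemma zit_comm n x : f (Z n x) = Z n (f x).
Proof. by rewrite -[f (Z n x)]/(Z 1 _) -zitD addrC zitD. Qed.

Lemma zit_fixed c : f c = c -> forall n, Z n c = c.
Proof.
move=> fc n; elim/int_rect: n => [//|n IH|n IH].
  by rewrite -addn1 PoszD zitS IH.
by rewrite -addn1 PoszD opprD zitP IH -{1}fc fK.
Qed.

Lemma zit_invariant (U : Type) (g : T -> U) : (forall x, g (f x) = g x) ->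
  forall n x, g (Z n x) = g x.
Proof.
move=> gf n; elim/int_rect: n => [//|n IH|n IH] x.
  by rewrite -addn1 PoszD zitS gf IH.
by rewrite -addn1 PoszD opprD zitP -gf fiK IH.
Qed.

End IntegerIterates.

Lemma zit_linear (F : fieldType) (V : lmodType F) (f fi : V -> V) :
  lin_aut f fi -> forall n, linear (zit f fi n).
Proof.
move=> [lf fK fiK].
have lfi : linear fi by move=> a u v; apply: (can_inj fK); rewrite lf !fiK.
have iter_linear g : linear g -> forall n, linear (iter n g).
  by move=> lg; elim=> [|n IH] a u v //=; rewrite IH lg.
by case=> n /=; apply: iter_linear.
Qed.

Section TeqX.
Variables (F : fieldType) (H C : lmodType F).

Lemma teqX_sym (z z' : seq (C * H)) : teqX z z' -> teqX z' z.
Proof. by move=> zz' f g sf sg; rewrite zz'. Qed.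

Lemma teqX_trans (z1 z2 z3 : seq (C * H)) : teqX z1 z2 -> teqX z2 z3 -> teqX z1 z3.
Proof. by move=> z12 z23 f g sf sg; rewrite z12 ?z23. Qed.

End TeqX.

Section CrossedProductBimodule.
Variables (F : fieldType) (H C : lmodType F) (m k : int)
  (mulH : H -> H -> H) (oneH : H) (DH : H -> seq (H * H)) (eH : H -> F)
  (al ali : H -> H)
  (mulC : C -> C -> C) (oneC : C) (DC : C -> seq (C * C)) (eC : C -> F)
  (be bei : C -> C)
  (act : H -> C -> C) (rho : C -> seq (H * C)) (sigma : H -> H -> C).
Hypotheses (HB : hom_bialgebra mulH oneH DH eH al ali)
  (HAC : hom_algebra mulC oneC be bei)
  (WM : weak_module_algebra DH eH mulC oneC act)
  (Sb : bilinear_map sigma)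
  (XB : X_hom_bialgebra mulH oneH DH eH al ali mulC oneC DC eC be bei act rho sigma m k).

Local Notation A n := (zit al ali n).
Local Notation B n := (zit be bei n).
Local Notation mulX := (mulX mulH DH al ali mulC be bei act sigma m k).
Local Notation mulX1 := (mulX1 mulH DH al ali mulC be bei act sigma m k).
Local Notation xiX := (xiX al be).
Local Notation phil1 := (phil1 mulH DH al ali mulC bei act sigma m k).
Local Notation phir1 := (phir1 mulH DH al ali mulC sigma m k).
Local Notation phil := (phil mulH DH al ali mulC bei act sigma m k).
Local Notation phir := (phir mulH DH al ali mulC sigma m k).
Local Notation oneX := (oneX oneH oneC).
Local Notation teqX := (@teqX F H C).

Let al_aut : lin_aut al ali := ha_aut (hb_alg HB).
Let be_aut : lin_aut be bei := ha_aut HAC.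
Let alK : cancel al ali := let: And3 _ x _ := al_aut in x.
Let aliK : cancel ali al := let: And3 _ _ x := al_aut in x.
Let beK : cancel be bei := let: And3 _ x _ := be_aut in x.
Let beiK : cancel bei be := let: And3 _ _ x := be_aut in x.
Let A_lin n : linear (A n) := zit_linear al_aut n.
Let B_lin n : linear (B n) := zit_linear be_aut n.
Let al_lin : linear al := A_lin 1.
Let ali_lin : linear ali := A_lin (-1).
Let be_lin : linear be := B_lin 1.
Let bei_lin : linear bei := B_lin (-1).
Let DH_lin : tensor_linear DH := hc_cop (hb_coalg HB).
Let eH_scalar : scalar eH := hc_eps (hb_coalg HB).
Let mulH_linl w : linear (mulH^~ w) := (ha_mul (hb_alg HB)).2 w.
Let mulH_linr w : linear (mulH w) := (ha_mul (hb_alg HB)).1 w.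
Let mulC_linl w : linear (mulC^~ w) := (ha_mul HAC).2 w.
Let mulC_linr w : linear (mulC w) := (ha_mul HAC).1 w.
Let act_linl c : linear (act^~ c) := (wm_lin WM).2 c.
Let act_linr h : linear (act h) := (wm_lin WM).1 h.
Let sigma_linl h : linear (sigma^~ h) := Sb.2 h.
Let sigma_linr h : linear (sigma h) := Sb.1 h.

Let zS n x : A (n + 1) x = al (A n x). Proof. exact: zitS. Qed.
Let zP n x : A (n - 1) x = ali (A n x). Proof. exact: zitP. Qed.
Let zD n n' x : A (n + n') x = A n (A n' x). Proof. exact: zitD. Qed.
Let alA x : al x = A 1 x. Proof. by []. Qed.
Let aliA x : ali x = A (-1) x. Proof. by []. Qed.
Let zNK n x : A n (A (- n) x) = x. Proof. exact: zitNK. Qed.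
Let A_eq n n' x : n = n' -> A n x = A n' x. Proof. by move=> ->. Qed.

Let be1 : be oneC = oneC := ha_one HAC.
Let al1 : al oneH = oneH := ha_one (hb_alg HB).
Let bei1 : bei oneC = oneC. Proof. by rewrite -{1}be1 beK. Qed.
Let ali1 : ali oneH = oneH. Proof. by rewrite -{1}al1 alK. Qed.
Let mul1C x : mulC oneC x = be x := ha_unitl HAC x.
Let mulC1 x : mulC x oneC = be x := ha_unitr HAC x.
Let beM x y : be (mulC x y) = mulC (be x) (be y) := ha_morph HAC x y.
Let alM x y : al (mulH x y) = mulH (al x) (al y) := ha_morph (hb_alg HB) x y.
Let act1 h : act h oneC = eH h *: oneC := wm_one WM h.
Let eH_al x : eH (al x) = eH x := hc_epsmorph (hb_coalg HB) x.
Let eH_mul x y : eH (mulH x y) = eH x * eH y := hb_epsmul HB x y.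
Let eH_A n x : eH (A n x) = eH x. Proof. exact: zit_invariant. Qed.
Let A1 n : A n oneH = oneH. Proof. exact: zit_fixed. Qed.

Ltac lin_step :=
  first [ assumption
        | by move=> ? ? ?
        | apply: scalar_big => ?
        | apply: linear_big => ?
        | apply: tensor_linear_bilinear; [exact: DH_lin | split => ? /=]
        | apply: scalar_mulr
        | apply: scalar_mull
        | apply: linear_compl; [assumption|]
        | apply: linear_compr; [assumption|]
        | apply: scalar_comp; [assumption|]
        | apply: linear_comp; [first [assumption | exact: A_lin | exact: B_lin] |] ].
Ltac lin_tac := repeat lin_step.

Lemma cop_ali x f g : scalar f -> scalar g ->
  \sum_(p <- DH (ali x)) f p.1 * g p.2 = \sum_(p <- DH x) f (ali p.1) * g (ali p.2).
Proof.
move=> sf sg.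
have := hc_copmorph (hb_coalg HB) (ali x) (scalar_comp sf ali_lin) (scalar_comp sg ali_lin).
by rewrite aliK /=; under [X in _ = X -> _]eq_bigr do rewrite !alK; move=> ->.
Qed.

Lemma cop_zit n x : tensor_eq (DH (A n x)) [seq (A n p.1, A n p.2) | p <- DH x].
Proof.
move=> f g sf sg; rewrite big_map.
elim/int_rect: n f g sf sg x => [//|n IH|n IH] f g sf sg x.
  rewrite -addn1 PoszD zS (hc_copmorph (hb_coalg HB)) //.
  rewrite (IH (fun y => f (al y)) (fun y => g (al y))); try exact: scalar_comp.
  by under eq_bigr do rewrite -!zS.
rewrite -addn1 PoszD opprD zP cop_ali //.
rewrite (IH (fun y => f (ali y)) (fun y => g (ali y))); try exact: scalar_comp.
by under eq_bigr do rewrite -!zP.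
Qed.

Lemma big_cop_zit n x G : bilinear_form G ->
  \sum_(p <- DH (A n x)) G p = \sum_(p <- DH x) G (A n p.1, A n p.2).
Proof. by move=> bG; rewrite (tensor_eq_bilinear (cop_zit n x) bG) big_map. Qed.

Lemma counitr_linear (U : lmodType F) (Psi : H -> U) c : linear Psi ->
  \sum_(p <- DH c) eH p.2 *: Psi p.1 = Psi (ali c).
Proof.
move=> lPsi; rewrite -(hc_counitr (hb_coalg HB)) lin_sum //.
by under [RHS]eq_bigr do rewrite (linZ lPsi).
Qed.

Lemma counitl_linear (U : lmodType F) (Psi : H -> U) c : linear Psi ->
  \sum_(p <- DH c) eH p.1 *: Psi p.2 = Psi (ali c).
Proof.
move=> lPsi; rewrite -(hc_counitl (hb_coalg HB)) lin_sum //.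
by under [RHS]eq_bigr do rewrite (linZ lPsi).
Qed.

Lemma counitl_scalar (Psi : H -> F) c : scalar Psi ->
  \sum_(p <- DH c) eH p.1 * Psi p.2 = Psi (ali c).
Proof. exact: (counitl_linear (U := F^o)). Qed.

Lemma big_mulX1 (U : nmodType) (G : C * H -> U) p q :
  \sum_(u <- mulX1 p q) G u =
  \sum_(t <- DH p.2) \sum_(r <- DH t.1) \sum_(s <- DH q.2)
     G (mulC p.1 (mulC (act (A m r.1) (B (-2) q.1)) (sigma (A (k + 1) r.2) (A k s.1))),
        al (mulH t.2 s.2)).
Proof.
rewrite /Defs.mulX1 big_flatten big_map; apply: eq_bigr => t _.
by rewrite big_allpairs_dep.
Qed.

Lemma big_mulX (U : nmodType) (G : C * H -> U) x y :
  \sum_(u <- mulX x y) G u = \sum_(p <- x) \sum_(q <- y) \sum_(u <- mulX1 p q) G u.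
Proof. by rewrite /Defs.mulX big_flatten big_allpairs_dep. Qed.

Lemma mulX_congr_r y z z' : teqX z z' -> teqX (mulX y z) (mulX y z').
Proof.
move=> zz' f g sf sg; rewrite !big_mulX; apply: eq_bigr => p _.
apply: (tensor_eq_bilinear zz'); split=> v; apply: eq_scalar (fun w => big_mulX1 _ _ _) _;
  rewrite /evX /=; lin_tac.
Qed.

Lemma mulX_congr_l y z z' : teqX z z' -> teqX (mulX z y) (mulX z' y).
Proof.
move=> zz' f g sf sg; rewrite !big_mulX.
under eq_bigr do under eq_bigr do rewrite big_mulX1.
under [RHS]eq_bigr do under eq_bigr do rewrite big_mulX1.
apply: (tensor_eq_bilinear zz'); split=> v /=; rewrite /evX /=; lin_tac.
Qed.

Definition contractX (z : seq (C * H)) : C := \sum_(p <- z) eH p.2 *: p.1.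

Lemma contractX_teqX z z' : teqX z z' -> contractX z = contractX z'.
Proof.
move=> zz'; apply: linear_forms_eq => f sf; rewrite !sc_sum //.
under eq_bigr do rewrite (scZ sf) mulrC.
under [RHS]eq_bigr do rewrite (scZ sf) mulrC.
exact: zz' f eH sf eH_scalar.
Qed.

Lemma contractX_xi z : contractX (xiX z) = be (contractX z).
Proof.
rewrite /contractX big_map lin_sum //.
by under [RHS]eq_bigr do rewrite (linZ be_lin) -eH_al.
Qed.

Lemma contractX_mulX1 a h b g : contractX (mulX1 (a, h) (b, g)) =
  \sum_(t <- DH h) eH t.2 *: \sum_(r <- DH t.1)
     mulC a (mulC (act (A m r.1) (B (-2) b)) (sigma (A (k + 1) r.2) (A k (ali g)))).
Proof.
rewrite /contractX big_mulX1 /=; apply: eq_bigr => t _.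
rewrite scaler_sumr; apply: eq_bigr => r _.
under eq_bigr do rewrite /= eH_al eH_mul -scalerA.
rewrite -scaler_sumr (counitr_linear (Psi := fun y => mulC a (mulC (act (A m r.1) (B (-2) b))
   (sigma (A (k + 1) r.2) (A k y))))) //; lin_tac.
Qed.

Lemma mulX_single p q : mulX [:: p] [:: q] = mulX1 p q.
Proof. by rewrite /Defs.mulX /= cats0. Qed.

Lemma contractX_single c h : contractX [:: (c, h)] = eH h *: c.
Proof. by rewrite /contractX big_cons big_nil addr0. Qed.

Lemma sigma_unitr y : sigma y oneH = eH y *: oneC.
Proof.
have := contractX_teqX (xa_unitr XB [:: (oneC, A (1 - k) y)]).
rewrite mulX_single contractX_mulX1 /xiX /= contractX_single eH_al eH_A be1 !bei1 ali1 A1.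
under eq_bigr do under eq_bigr do
  rewrite act1 eH_A (linZ (mulC_linl _)) (linZ (mulC_linr _)) !mul1C.
have lP : linear (fun y => be (be (sigma (A (k + 1) y) oneH))) by lin_tac.
under eq_bigr do rewrite (counitl_linear _ lP).
have lP' : linear (fun x => be (be (sigma (A (k + 1) (ali x)) oneH))) by lin_tac.
rewrite (counitr_linear _ lP') !aliA -!zD (A_eq _ (_ : _ = 0)); last by lia.
move=> E; apply: (can_inj beK); apply: (can_inj beK).
by rewrite E !(linZ be_lin) !be1.
Qed.

Lemma contractX_mul_1h_1g h g : contractX (mulX1 (oneC, h) (oneC, g)) =
  be (be (sigma (A (k - 1) h) (A (k - 1) g))).
Proof.
rewrite contractX_mulX1 /= !bei1.
under eq_bigr do under eq_bigr do
  rewrite act1 eH_A (linZ (mulC_linl _)) (linZ (mulC_linr _)) !mul1C.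
have lP : linear (fun y => be (be (sigma (A (k + 1) y) (A k (ali g))))) by lin_tac.
under eq_bigr do rewrite (counitl_linear _ lP).
have lP' : linear (fun x => be (be (sigma (A (k + 1) (ali x)) (A k (ali g))))) by lin_tac.
rewrite (counitr_linear _ lP') !aliA -!zD.
by rewrite (A_eq _ (_ : _ = k - 1)) 1?(A_eq (A (-1) g) (_ : _ = k - 1)) //; lia.
Qed.

Lemma sigma_hom x y : be (sigma x y) = sigma (al x) (al y).
Proof.
have := contractX_teqX (xa_morph XB [:: (oneC, A (1 - k) x)] [:: (oneC, A (1 - k) y)]).
rewrite contractX_xi /xiX /xi1 /= be1 !mulX_single !contractX_mul_1h_1g !alA -!zD.
have -> : k - 1 + (1 - k) = 0 by lia.
have -> : k - 1 + 1 + (1 - k) = 1 by lia.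
by move=> E; apply: (can_inj beK); apply: (can_inj beK).
Qed.

Lemma contractX_mul_1h_b1 h b : contractX (mulX1 (oneC, h) (b, oneH)) =
  be (be (act (A m (ali (ali h))) (B (-2) b))).
Proof.
rewrite contractX_mulX1 ali1 A1.
under eq_bigr do under eq_bigr do
  rewrite sigma_unitr eH_A (linZ (mulC_linr _)) mulC1 (linZ (mulC_linr _)) !mul1C.
have lP : linear (fun y => be (be (act (A m y) (B (-2) b)))) by lin_tac.
under eq_bigr do rewrite (counitr_linear _ lP).
have lP' : linear (fun x => be (be (act (A m (ali x)) (B (-2) b)))) by lin_tac.
by rewrite (counitr_linear _ lP').
Qed.

Lemma act_hom u c : be (act u c) = act (al u) (be c).
Proof.
have := contractX_teqX (xa_morph XB [:: (oneC, A (2 - m) u)] [:: (be (be c), oneH)]).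
rewrite contractX_xi /xiX /xi1 /= be1 al1 !mulX_single !contractX_mul_1h_b1 /= !beK.
rewrite !aliA !alA -!zD.
have -> : m - 1 - 1 + (2 - m) = 0 by lia.
have -> : m - 1 - 1 + 1 + (2 - m) = 1 by lia.
by move=> E; apply: (can_inj beK); apply: (can_inj beK).
Qed.

Lemma big_phil1 (U : nmodType) (G : C * H -> U) l p :
  \sum_(u <- phil1 l p) G u =
  \sum_(t <- DH l) \sum_(r <- DH t.1) \sum_(s <- DH p.2)
     G (mulC (act (al r.1) (bei p.1)) (sigma (A (k + 2 - m) r.2) (A (k + 1) s.1)),
        mulH (A (1 - m) t.2) (al s.2)).
Proof.
rewrite /Defs.phil1 big_flatten big_map; apply: eq_bigr => t _.
by rewrite big_allpairs_dep.
Qed.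

Lemma big_phir1 (U : nmodType) (G : C * H -> U) p l :
  \sum_(u <- phir1 p l) G u =
  \sum_(s <- DH p.2) \sum_(t <- DH l)
     G (mulC p.1 (sigma (A (k + 1) s.1) (A (k + 1 - m) t.1)),
        mulH (al s.2) (A (1 - m) t.2)).
Proof. by rewrite /Defs.phir1 big_allpairs_dep. Qed.

Lemma phil1_teqX l p : teqX (phil1 l p) (mulX1 (oneC, A (- m) l) p).
Proof.
move=> f g sf sg; rewrite /evX big_phil1 big_mulX1 /=.
under [RHS]eq_bigr do under eq_bigr do under eq_bigr do
  rewrite mul1C beM act_hom sigma_hom alM beiK.
rewrite big_cop_zit; last by split=> ? /=; lin_tac.
apply: eq_bigr => t _ /=.
rewrite big_cop_zit; last by split=> ? /=; lin_tac.
apply: eq_bigr => r _; apply: eq_bigr => s _ /=.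
rewrite zNK -!zS -zD.
have -> : k + 1 + 1 - m = k + 2 - m by lia.
by have -> : - m + 1 = 1 - m by lia.
Qed.

Lemma phir1_teqX p l : teqX (phir1 p l) (mulX1 p (oneC, A (- m) l)).
Proof.
move=> f g sf sg; rewrite /evX big_phir1 big_mulX1 /=.
under [RHS]eq_bigr do under eq_bigr do under eq_bigr do
  rewrite !bei1 act1 eH_A (linZ (mulC_linl _)) mul1C sigma_hom (linZ (mulC_linr _))
          (scZ sf) alM -mulrA.
apply: eq_bigr => t _.
under [RHS]eq_bigr do rewrite -mulr_sumr.
have sP : scalar (fun y => \sum_(s <- DH (A (- m) l))
   f (mulC p.1 (sigma (al (A (k + 1) y)) (al (A k s.1)))) * g (mulH (al t.2) (al s.2))).
  by lin_tac.
rewrite (counitl_scalar _ sP) big_cop_zit; last by split=> ? /=; lin_tac.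
apply: eq_bigr => s _ /=.
rewrite aliA -!zS -!zD.
have -> : k + 1 + 1 - 1 = k + 1 by lia.
by have -> : - m + 1 = 1 - m by lia.
Qed.

Definition one_tensor (l : H) : seq (C * H) := [:: (oneC, A (- m) l)].

Lemma phil_teqX l x : teqX (phil l x) (mulX (one_tensor l) x).
Proof.
move=> f g sf sg; rewrite big_mulX big_cons big_nil addr0.
rewrite /Defs.phil big_flatten big_map; apply: eq_bigr => q _.
exact: phil1_teqX.
Qed.

Lemma phir_teqX x l : teqX (phir x l) (mulX x (one_tensor l)).
Proof.
move=> f g sf sg; rewrite big_mulX /Defs.phir big_flatten big_map.
apply: eq_bigr => p _; rewrite big_cons big_nil addr0.
exact: phir1_teqX.
Qed.

Lemma one_tensor1 : one_tensor oneH = oneX.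
Proof. by rewrite /one_tensor A1. Qed.

Lemma xi_one_tensor l : xiX (one_tensor l) = one_tensor (al l).
Proof. by rewrite /one_tensor /xiX /xi1 /= be1 zit_comm. Qed.

Lemma phil_unit x : teqX (phil oneH x) (xiX x).
Proof.
apply: teqX_trans (phil_teqX _ _) _.
by rewrite one_tensor1; exact: xa_unitl XB x.
Qed.

Lemma phir_unit x : teqX (phir x oneH) (xiX x).
Proof.
apply: teqX_trans (phir_teqX _ _) _.
by rewrite one_tensor1; exact: xa_unitr XB x.
Qed.

Lemma phil_phir_compat l g x :
  teqX (phil (al l) (phir x g)) (phir (phil l x) (al g)).
Proof.
apply: teqX_trans (phil_teqX _ _) _.
apply: teqX_trans (mulX_congr_r _ (phir_teqX _ _)) _.
rewrite -xi_one_tensor.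
apply: teqX_trans (xa_assoc XB (one_tensor l) x (one_tensor g)) _.
rewrite xi_one_tensor.
apply: teqX_trans (mulX_congr_l _ (teqX_sym (phil_teqX _ _))) _.
exact: teqX_sym (phir_teqX _ _).
Qed.

End CrossedProductBimodule.

Theorem lemma4p9 (F : fieldType) (H C : lmodType F) (m k : int)
  (mulH : H -> H -> H) (oneH : H) (DH : H -> seq (H * H)) (eH : H -> F)
  (al ali : H -> H)
  (mulC : C -> C -> C) (oneC : C) (DC : C -> seq (C * C)) (eC : C -> F)
  (be bei : C -> C)
  (act : H -> C -> C) (rho : C -> seq (H * C)) (sigma : H -> H -> C) :
  hom_bialgebra mulH oneH DH eH al ali ->
  hom_algebra mulC oneC be bei ->
  hom_coalgebra DC eC be bei ->
  weak_module_algebra DH eH mulC oneC act ->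
  hom_comodule_coalgebra mulH oneH DH eH al ali DC eC be bei rho ->
  bilinear_map sigma ->
  conv_invertible DH eH mulC oneC sigma ->
  X_hom_bialgebra mulH oneH DH eH al ali mulC oneC DC eC be bei act rho sigma m k ->
  weak_hom_bimodule mulH oneH DH al ali mulC be bei act sigma m k.
Proof.
move=> HB HAC _ WM _ Sb _ XB.
split=> [x|l g x]; first split.
- exact: phil_unit HB HAC WM Sb XB x.
- exact: phir_unit HB HAC WM Sb XB x.
- exact: phil_phir_compat HB HAC WM Sb XB l g x.
Qed.
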